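(* Let $\{w_t\}$, $\{z_t\}$, $\{v_t\}$, $\{\hat D_t\}$ be generated by {\tt Scaled L-SVRG} with step-size $\eta>0$ and probability $p\in(0,1]$. Then for every $t\ge0$ and every $B>0$, $$\mathbb{E}_t\left[\|w_{t+1}-z_{t+1}\|^2\right]\le\frac{\eta^2}{\alpha}\mathbb{E}_t\left[\|v_t\|^2_{\hat D_t^{-1}}\right]+(1-p)(1+\eta B)\|w_t-z_t\|^2+(1-p)\frac{\eta}{\alpha B}\|\nabla P(w_t)\|^2_{\hat D_t^{-1}}.$$
   Context: $P=\frac1n\sum_{i=1}^nf_i$ with twice differentiable $f_i:\mathbb{R}^d\to\mathbb{R}$. $\|x\|_D^2=x^TDx$. For $J\subseteq[n]$, $\nabla^2P_J(w)=\frac1{|J|}\sum_{j\in J}\nabla^2 f_j(w)$; $\odot$ is the Hadamard product; $\mathrm{diag}(x)$ is the diagonal matrix with the entries of $x$. Preconditioner (parameters $\alpha>0$, $\beta\in(0,1)$, $m\ge1$): $D_0=\frac1m\sum_{j=1}^m\mathrm{diag}(z'_j\odot\nabla^2P_{\mathcal{J}_j}(w_0)z'_j)$, $D_t=\beta D_{t-1}+(1-\beta)\mathrm{diag}(z'_t\odot\nabla^2P_{\mathcal{J}_t}(w_t)z'_t)$ for $t\ge1$, with independent Rademacher vectors $z'$ and random index sets $\mathcal{J}\subseteq[n]$, independent of the gradient samples; $\hat D_t$ diagonal with $(\hat D_t)_{ii}=\max\{\alpha,|(D_t)_{ii}|\}$. {\tt Scaled L-SVRG}: $z_0=w_0$,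 $v_0=\nabla P(w_0)$; for $t\ge0$: $w_{t+1}=w_t-\eta\hat D_t^{-1}v_t$; $z_{t+1}=w_t$ with probability $p$ and $z_{t+1}=z_t$ with probability $1-p$; draw $i_{t+1}$ uniformly from $[n]$ independently; $v_{t+1}=\nabla f_{i_{t+1}}(w_{t+1})-\nabla f_{i_{t+1}}(z_{t+1})+\nabla P(z_{t+1})$; update $\hat D_{t+1}$. $\mathbb{E}_t$ denotes conditional expectation given $w_t$, $z_t$ and $\hat D_t$ (the remaining randomness being the index used in $v_t$ and the coin flip defining $z_{t+1}$). *)

From HB Require Import structures.
From mathcomp Require Import all_boot all_order all_algebra.
From mathcomp Require Import all_classical all_reals all_analysis.
Set Implicit Arguments. Unset Strict Implicit. Unset Printing Implicit Defensive.
Import Order.TTheory GRing.Theory Num.Theory.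
Import numFieldNormedType.Exports.
Local Open Scope ring_scope.

Section Defs.
Context {R : realType}.

Definition grad {d : nat} (f : 'cV[R]_d -> R) (x : 'cV[R]_d) : 'cV[R]_d :=
  \col_k ('d f x (delta_mx k 0)).

Definition hess {d : nat} (f : 'cV[R]_d -> R) (x : 'cV[R]_d) : 'M[R]_d :=
  \matrix_(k, l) (('d (grad f) x (delta_mx l 0)) k 0).

Definition sqn {d : nat} (x : 'cV[R]_d) : R := (x^T *m x) 0 0.
Definition dnorm2 {d : nat} (D : 'M[R]_d) (x : 'cV[R]_d) : R := (x^T *m D *m x) 0 0.

Definition hadamard {d : nat} (u v : 'cV[R]_d) : 'cV[R]_d := map2_mx *%R u v.
Definition diagv {d : nat} (u : 'cV[R]_d) : 'M[R]_d := diag_mx u^T.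

Definition Pavg {n d : nat} (f : 'I_n -> 'cV[R]_d -> R) : 'cV[R]_d -> R :=
  fun x => n%:R^-1 * \sum_(i < n) f i x.

Definition hessPJ {n d : nat} (f : 'I_n -> 'cV[R]_d -> R) (J : {set 'I_n})
  (w : 'cV[R]_d) : 'M[R]_d := #|J|%:R^-1 *: \sum_(j in J) hess (f j) w.

Definition Dhat {d : nat} (alpha : R) (D : 'M[R]_d) : 'M[R]_d :=
  diag_mx (\row_i Num.max alpha `|D i i|).

Definition Dinit {n d m : nat} (f : 'I_n -> 'cV[R]_d -> R) (zi : 'I_m -> 'cV[R]_d)
  (Ji : 'I_m -> {set 'I_n}) (w0 : 'cV[R]_d) : 'M[R]_d :=
  m%:R^-1 *: \sum_(j < m) diagv (hadamard (zi j) (hessPJ f (Ji j) w0 *m zi j)).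

Definition vdir {n d : nat} (f : 'I_n -> 'cV[R]_d -> R) (idx : nat -> 'I_n)
  (t : nat) (w z : 'cV[R]_d) : 'cV[R]_d :=
  if t is 0 then grad (Pavg f) w
  else grad (f (idx t)) w - grad (f (idx t)) z + grad (Pavg f) z.

(* Scaled L-SVRG trajectory: state at time t is (w_t, z_t, D_t), as a
   function of a realization of all the randomness:
   idx t  = i_t (index used in v_t, t >= 1),
   coin t = true iff z_t := w_{t-1} (event of probability p), t >= 1,
   zs t, Js t = Rademacher vector / index set used for D_t, t >= 1,
   zi j, Ji j (j < m) = those used for D_0. *)
Fixpoint slsvrg {n d m : nat} (f : 'I_n -> 'cV[R]_d -> R) (eta alpha beta : R)
  (w0 : 'cV[R]_d) (zi : 'I_m -> 'cV[R]_d) (Ji : 'I_m -> {set 'I_n})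
  (zs : nat -> 'cV[R]_d) (Js : nat -> {set 'I_n})
  (idx : nat -> 'I_n) (coin : nat -> bool) (t : nat)
  : 'cV[R]_d * 'cV[R]_d * 'M[R]_d :=
  match t with
  | 0 => (w0, w0, Dinit f zi Ji w0)
  | t'.+1 =>
    let st := slsvrg f eta alpha beta w0 zi Ji zs Js idx coin t' in
    let w := st.1.1 in let z := st.1.2 in let D := st.2 in
    let w' := w - eta *: (invmx (Dhat alpha D) *m vdir f idx t' w z) in
    let z' := if coin t then w else z in
    let D' := beta *: D + (1 - beta) *:
                diagv (hadamard (zs t) (hessPJ f (Js t) w' *m zs t)) in
    (w', z', D')
  end.

End Defs.

Definition upd {A : Type} (g : nat -> A) (s : nat) (a : A) : nat -> A :=
  fun k => if k == s then a else g k.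

(* E_t: expectation over the fresh index i (uniform on [n]) used in v_t and the
   fresh coin b (true with probability p) defining z_{t+1} *)
Definition Et {R : realType} {n : nat} (p : R) (X : 'I_n -> bool -> R) : R :=
  n%:R^-1 * \sum_(i < n) (p * X i true + (1 - p) * X i false).

From HB Require Import structures.
From mathcomp Require Import all_boot all_order all_algebra.
From mathcomp Require Import all_classical all_reals all_analysis.
From mathcomp Require Import ring lra.
Import Order.TTheory GRing.Theory Num.Theory.
Import numFieldNormedType.Exports.
Local Open Scope ring_scope.

(* Given (w, z, D), the step gives w' - z' = -eta D^-1 v when the coin refreshes
   z and (w - z) - eta D^-1 v otherwise, so averaging over the coin yields
   eta^2 |D^-1 v|^2 + (1 - p) |w - z|^2 - 2 (1 - p) eta <w - z, D^-1 v>.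
   The cross term is linear in v, whose mean over the index is grad P(w)
   (the SVRG direction is unbiased), and Young's inequality with weight B
   bounds it.  Both remaining |D^-1 x|^2 are at most alpha^-1 |x|^2_{D^-1},
   because D^-1 is diagonal with entries in (0, 1/alpha]. *)

Section Quadratic.
Context {R : realType} {d : nat}.
Implicit Types (x y u w z : 'cV[R]_d) (r : 'rV[R]_d).

Definition dotv x y : R := (x^T *m y) 0 0.

Lemma dotvE x y : dotv x y = \sum_k x k 0 * y k 0.
Proof. by rewrite /dotv mxE; apply: eq_bigr => k _; rewrite mxE. Qed.

Lemma dotvZr y (c : R) x : dotv y (c *: x) = c * dotv y x.
Proof. by rewrite /dotv -scalemxAr mxE. Qed.

Lemma dotv_sumr n y (F : 'I_n -> 'cV[R]_d) :
  dotv y (\sum_i F i) = \sum_i dotv y (F i).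
Proof. by rewrite /dotv mulmx_sumr summxE. Qed.

Lemma sqnE x : sqn x = \sum_k x k 0 ^+ 2.
Proof. by rewrite /sqn mxE; apply: eq_bigr => k _; rewrite mxE expr2. Qed.

Lemma dnorm2_diagE r x : dnorm2 (diag_mx r) x = \sum_k r 0 k * x k 0 ^+ 2.
Proof.
rewrite /dnorm2 mxE; apply: eq_bigr => k _.
by rewrite mul_mx_diag !mxE expr2 mulrCA mulrA.
Qed.

Lemma coin_mix_sqn (p eta : R) w z u :
  p * sqn (w - eta *: u - w) + (1 - p) * sqn (w - eta *: u - z)
  = eta ^+ 2 * sqn u + (1 - p) * sqn (w - z) - 2 * (1 - p) * eta * dotv (w - z) u.
Proof.
rewrite !sqnE dotvE !mulr_sumr -!big_split -sumrB /=.
by apply: eq_bigr => k _; rewrite !mxE; ring.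
Qed.

Lemma dotv_young (B : R) y u : 0 < B -> - (2 * dotv y u) <= B * sqn y + sqn u / B.
Proof.
move=> B0; rewrite !sqnE dotvE mulr_sumr mulr_sumr mulr_suml -sumrN -big_split.
apply: ler_sum => k _; rewrite -subr_ge0.
have -> : B * y k 0 ^+ 2 + u k 0 ^+ 2 / B - - (2 * (y k 0 * u k 0))
          = (B * y k 0 + u k 0) ^+ 2 / B by field; rewrite gt_eqF.
by rewrite divr_ge0 ?sqr_ge0 ?ltW.
Qed.

Lemma sqn_diag_le (a : R) r x : (forall k, 0 <= r 0 k <= a) ->
  sqn (diag_mx r *m x) <= a * dnorm2 (diag_mx r) x.
Proof.
move=> r_bd; rewrite sqnE dnorm2_diagE mulr_sumr; apply: ler_sum => k _.
have /andP[r0 ra] := r_bd k.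
rewrite mul_diag_mx mxE exprMn expr2 -mulrA.
by apply: ler_wpM2r => //; rewrite mulr_ge0 ?sqr_ge0.
Qed.

End Quadratic.

Section Expectation.
Context {R : realType} {n : nat} (p : R).

Lemma eq_Et {X Y : 'I_n -> bool -> R} :
  (forall i b, X i b = Y i b) -> Et p X = Et p Y.
Proof. by move=> XY; rewrite /Et; under eq_bigr => i _ do rewrite !XY. Qed.

Lemma Et_coin_free (X : 'I_n -> R) : Et p (fun i _ => X i) = n%:R^-1 * \sum_i X i.
Proof. by rewrite /Et; congr (_ * _); apply: eq_bigr => i _; ring. Qed.

Lemma Et_sqn_step {d} (eta alpha B : R) (r : 'rV[R]_d) (w z g : 'cV[R]_d)
  (v : 'I_n -> 'cV[R]_d) :
  (0 < n)%N -> p <= 1 -> 0 <= eta -> 0 < B ->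
  (forall k, 0 <= r 0 k <= alpha^-1) -> \sum_i v i = n%:R *: g ->
  Et p (fun i b => sqn (w - eta *: (diag_mx r *m v i) - (if b then w else z)))
  <= eta ^+ 2 / alpha * Et p (fun i _ => dnorm2 (diag_mx r) (v i))
     + (1 - p) * (1 + eta * B) * sqn (w - z)
     + (1 - p) * (eta / (alpha * B)) * dnorm2 (diag_mx r) g.
Proof.
move=> n_gt0 p_le1 eta_ge0 B_gt0 r_bd sum_v.
have n_neq0 : n%:R != 0 :> R by rewrite pnatr_eq0 -lt0n.
set y := w - z.
set S := n%:R^-1 * \sum_i sqn (diag_mx r *m v i).
set X := dotv y (diag_mx r *m g).
have mean_dot : n%:R^-1 * \sum_i dotv y (diag_mx r *m v i) = X.
  rewrite -dotv_sumr -mulmx_sumr sum_v -scalemxAr dotvZr.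
  by rewrite mulrA mulVf // mul1r.
have -> : Et p (fun i b => sqn (w - eta *: (diag_mx r *m v i) - (if b then w else z)))
          = eta ^+ 2 * S + (1 - p) * sqn y - 2 * (1 - p) * eta * X.
  rewrite /Et; under eq_bigr => i _ do rewrite coin_mix_sqn.
  rewrite -mean_dot sumrB big_split /= sumr_const card_ord -!mulr_sumr -mulr_natr.
  by rewrite /S; field.
rewrite Et_coin_free.
have S_le : S <= alpha^-1 * (n%:R^-1 * \sum_i dnorm2 (diag_mx r) (v i)).
  rewrite mulrCA mulr_sumr; apply: ler_wpM2l; first by rewrite invr_ge0 ler0n.
  by apply: ler_sum => i _; apply: sqn_diag_le.
have X_le : - (2 * X) <= B * sqn y + alpha^-1 * dnorm2 (diag_mx r) g / B.
  apply: le_trans (dotv_young _ y _ B_gt0) _.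
  by rewrite lerD2l ler_pM2r ?invr_gt0 //; apply: sqn_diag_le.
have mix_ge0 : 0 <= (1 - p) * eta by rewrite mulr_ge0 // subr_ge0.
have := ler_wpM2l mix_ge0 X_le; have := ler_wpM2l (sqr_ge0 eta) S_le.
rewrite invfM; lra.
Qed.

End Expectation.

Lemma invmx_Dhat (R : realType) d (alpha : R) (D : 'M[R]_d) : 0 < alpha ->
  invmx (Dhat alpha D) = diag_mx (\row_i (Num.max alpha `|D i i|)^-1).
Proof.
move=> alpha_gt0; set E := diag_mx _.
have DE : Dhat alpha D *m E = 1%:M.
  apply/matrixP => i j; rewrite /Dhat mulmx_diag !mxE.
  case: eqP => [->|]; last by rewrite mulr0n.
  by rewrite mulfV // gt_eqF // lt_max alpha_gt0.
have [D_unit _] := mulmx1_unit DE.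
by rewrite -[RHS](mulKmx D_unit) DE mulmx1.
Qed.

Lemma inv_max_bound (R : realType) (alpha x : R) : 0 < alpha ->
  0 <= (Num.max alpha x)^-1 <= alpha^-1.
Proof.
move=> alpha_gt0; have m_gt0 : 0 < Num.max alpha x by rewrite lt_max alpha_gt0.
by rewrite invr_ge0 ltW //= lef_pV2 ?posrE // le_max lexx.
Qed.

Lemma sum_control_variate (R : fieldType) (V : lmodType R) n (F G : 'I_n -> V) c :
  n%:R != 0 :> R -> c = n%:R^-1 *: \sum_i G i ->
  \sum_i (F i - G i + c) = \sum_i F i.
Proof.
move=> n_neq0 ->; rewrite big_split /= sumrB sumr_const card_ord -scaler_nat.
by rewrite scalerA mulfV // scale1r subrK.
Qed.

Section Trajectory.
Context {R : realType} {n d m : nat} (f : 'I_n -> 'cV[R]_d -> R).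

Section Unbiased.
Hypothesis df : forall i x, differentiable (f i) x.

Lemma grad_Pavg x : grad (Pavg f) x = n%:R^-1 *: \sum_i grad (f i) x.
Proof.
have -> : Pavg f = n%:R^-1 *: \sum_i f i by apply/funext => y; rewrite /Pavg fct_sumE.
have ds : differentiable (\sum_i f i) x by apply: differentiable_sum.
apply/matrixP => k l; rewrite !mxE summxE diffZ //=.
rewrite -deriveE // derive_sum; last by move=> j; apply: diff_derivable.
by congr (_ * _); apply: eq_bigr => j _; rewrite !mxE deriveE.
Qed.

Lemma sum_vdir_upd idx t w z : (0 < n)%N ->
  \sum_i vdir f (upd idx t i) t w z = n%:R *: grad (Pavg f) w.
Proof.
move=> n_gt0; have n_neq0 : n%:R != 0 :> R by rewrite pnatr_eq0 -lt0n.
case: t => [|t]; first by rewrite sumr_const card_ord scaler_nat.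
under eq_bigr => i _ do rewrite /vdir /upd eqxx.
rewrite sum_control_variate //; last exact: grad_Pavg.
by rewrite [in RHS]grad_Pavg scalerA mulfV // scale1r.
Qed.

End Unbiased.

Lemma vdir_upd_neq idx t i k : k != t -> vdir f (upd idx t i) k = vdir f idx k.
Proof.
case: k => [|k] kt; first reflexivity.
by rewrite /vdir /upd (negbTE kt).
Qed.

Variables (alpha beta eta : R) (w0 : 'cV[R]_d).
Variables (zi : 'I_m -> 'cV[R]_d) (Ji : 'I_m -> {set 'I_n}).
Variables (zs : nat -> 'cV[R]_d) (Js : nat -> {set 'I_n}).

Lemma slsvrg_upd idx coin t i b k : (k <= t)%N ->
  slsvrg f eta alpha beta w0 zi Ji zs Js (upd idx t i) (upd coin t.+1 b) k
  = slsvrg f eta alpha beta w0 zi Ji zs Js idx coin k.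
Proof.
elim: k => [//|k IH] lekt; cbn [slsvrg].
have kt : k != t by rewrite neq_ltn lekt.
have -> : upd coin t.+1 b k.+1 = coin k.+1 by rewrite /upd ltn_eqF.
rewrite IH; last exact: ltnW.
(* With an open pattern, rewrite would compare [vdir] terms by unfolding
   [grad], which does not terminate in practice. *)
by rewrite (@vdir_upd_neq idx t i k kt).
Qed.

Lemma slsvrg_resample_sub idx coin t i b :
  let st := slsvrg f eta alpha beta w0 zi Ji zs Js idx coin t in
  let st' := slsvrg f eta alpha beta w0 zi Ji zs Js
               (upd idx t i) (upd coin t.+1 b) t.+1 in
  st'.1.1 - st'.1.2 =
  st.1.1 - eta *: (invmx (Dhat alpha st.2) *m vdir f (upd idx t i) t st.1.1 st.1.2)
  - (if b then st.1.1 else st.1.2).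
Proof. by cbn [slsvrg]; rewrite slsvrg_upd // /upd eqxx. Qed.

End Trajectory.

Theorem lemma5 (R : realType) (n d m : nat) (f : 'I_n -> 'cV[R]_d -> R)
  (alpha beta eta p B : R) (w0 : 'cV[R]_d)
  (zi : 'I_m -> 'cV[R]_d) (Ji : 'I_m -> {set 'I_n})
  (zs : nat -> 'cV[R]_d) (Js : nat -> {set 'I_n})
  (idx : nat -> 'I_n) (coin : nat -> bool) (t : nat) :
  (0 < n)%N -> (1 <= m)%N ->
  (forall i x, differentiable (f i) x) ->
  (forall i x, differentiable (grad (f i)) x) ->
  0 < alpha -> 0 < beta < 1 -> 0 < eta -> 0 < p <= 1 -> 0 < B ->
  (forall j k, zi j k 0 = 1 \/ zi j k 0 = -1) ->
  (forall s k, zs s k 0 = 1 \/ zs s k 0 = -1) ->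
  (forall j, (0 < #|Ji j|)%N) -> (forall s, (0 < #|Js s|)%N) ->
  let st := slsvrg f eta alpha beta w0 zi Ji zs Js idx coin t in
  let w := st.1.1 in let z := st.1.2 in let Dh := Dhat alpha st.2 in
  Et p (fun i b =>
    let st' := slsvrg f eta alpha beta w0 zi Ji zs Js
                 (upd idx t i) (upd coin t.+1 b) t.+1 in
    sqn (st'.1.1 - st'.1.2))
  <= eta ^+ 2 / alpha * Et p (fun i b => dnorm2 (invmx Dh) (vdir f (upd idx t i) t w z))
     + (1 - p) * (1 + eta * B) * sqn (w - z)
     + (1 - p) * (eta / (alpha * B)) * dnorm2 (invmx Dh) (grad (Pavg f) w).
Proof.
(* The construction of D_t enters only through the floor alpha in Dhat. *)
move=> n_gt0 _ df _ alpha_gt0 _ eta_gt0 /andP[_ p_le1] B_gt0 _ _ _ _; cbv zeta.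
rewrite (eq_Et p (fun i b => congr1 sqn (slsvrg_resample_sub f alpha beta eta
           w0 zi Ji zs Js idx coin t i b))).
rewrite invmx_Dhat //; apply: Et_sqn_step.
- exact: n_gt0.
- exact: p_le1.
- exact: ltW.
- exact: B_gt0.
- by move=> k; rewrite mxE inv_max_bound.
- exact: sum_vdir_upd.
Qed.
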